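(* Let $(\mathcal M,g)$ be a Lorentzian manifold, $K_{\mu\nu}$ a symmetric tensor with $\nabla_\kappa K_{\mu\nu}=0$ (Levi-Civita connection of $g$), $0<b<1$, $m$ a constant, and $L_b$ the Bogoslovsky–Finsler geodesic Lagrangian below. Let $M^2>0$ be a constant and suppose a vector field $\Upsilon$ satisfies, for some smooth function $\Omega(\mathrm x)$, $$\mathcal L_\Upsilon\left(g_{\mu\nu}-\frac{b}{1-b}M^2K_{\mu\nu}\right)=2\Omega(\mathrm x)\left(g_{\mu\nu}+M^2K_{\mu\nu}\right).$$ Then along every solution $(\mathrm x(\lambda),n(\lambda))$ of the Euler–Lagrange equations of $L_b$ on which $\mathcal G>0$, $\mathcal K>0$ and $\mathcal K/\mathcal G=M^{-2}$, the quantity $I=\Upsilon^\mu p_\mu$ is constant.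
   Context: Notation: $\mathcal G=-g_{\mu\nu}\dot{\mathrm x}^\mu\dot{\mathrm x}^\nu$, $\mathcal K=K_{\mu\nu}\dot{\mathrm x}^\mu\dot{\mathrm x}^\nu$, dots denote $d/d\lambda$. The Bogoslovsky–Finsler line element is $ds_F^2=g_{\mu\nu}d\mathrm x^\mu d\mathrm x^\nu\left[\frac{K_{\alpha\beta}d\mathrm x^\alpha d\mathrm x^\beta}{-g_{\mu\nu}d\mathrm x^\mu d\mathrm x^\nu}\right]^b$, and its einbein geodesic Lagrangian is $L_b=-\frac{1}{2n}\mathcal K^{\,b}\mathcal G^{\,1-b}-\frac{m^2}{2}n$ with $n(\lambda)>0$ an auxiliary variable varied independently. Momenta: $p_\mu=\partial L_b/\partial\dot{\mathrm x}^\mu$. Since $K$ is covariantly constant, the ratio $\mathcal K/\mathcal G$ is constant along every solution; $M^{-2}$ denotes its value. *)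

(* Coordinate (single-chart) formalization. *)
From HB Require Import structures.
From mathcomp Require Import all_boot all_order all_algebra.
From mathcomp Require Import all_classical all_reals all_analysis.
Set Implicit Arguments. Unset Strict Implicit. Unset Printing Implicit Defensive.
Import Order.TTheory GRing.Theory Num.Theory.
Import numFieldNormedType.Exports.
Local Open Scope classical_set_scope.
Local Open Scope ring_scope.

Section Defs.
Context {R : realType} {d : nat}.

Definition ebasis (i : 'I_d) : 'rV[R]_d := delta_mx 0 i.

Definition pd (i : 'I_d) (f : 'rV[R]_d -> R) (p : 'rV[R]_d) : R :=
  'D_(ebasis i) f p.

Fixpoint Dseq (vs : seq 'rV[R]_d) (f : 'rV[R]_d -> R) : 'rV[R]_d -> R :=
  match vs with
  | [::] => f
  | v :: vs' => fun p => 'D_v (Dseq vs' f) p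
  end.

Definition smooth_on (U : set 'rV[R]_d) (f : 'rV[R]_d -> R) : Prop :=
  forall (vs : seq 'rV[R]_d) (p : 'rV[R]_d), U p ->
    (forall v, derivable (Dseq vs f) p v) /\ {for p, continuous (Dseq vs f)}.

Definition qf (A : 'M[R]_d) (v : 'rV[R]_d) : R :=
  \sum_(i < d) \sum_(j < d) A i j * v 0 i * v 0 j.

Definition christoffel (g : 'rV[R]_d -> 'M[R]_d) (p : 'rV[R]_d)
  (l k m : 'I_d) : R :=
  2^-1 * \sum_(s < d) (invmx (g p)) l s *
     (pd k (fun q => g q s m) p + pd m (fun q => g q s k) p
      - pd s (fun q => g q k m) p).

Definition cov_deriv (g K : 'rV[R]_d -> 'M[R]_d) (p : 'rV[R]_d)
  (k mu nu : 'I_d) : R :=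
  pd k (fun q => K q mu nu) p
  - \sum_(l < d) christoffel g p l k mu * K p l nu
  - \sum_(l < d) christoffel g p l k nu * K p mu l.

Definition lie_deriv (Y : 'rV[R]_d -> 'rV[R]_d) (h : 'rV[R]_d -> 'M[R]_d)
  (p : 'rV[R]_d) (mu nu : 'I_d) : R :=
  \sum_(l < d) (Y p 0 l * pd l (fun q => h q mu nu) p
               + h p l nu * pd mu (fun q => Y q 0 l) p
               + h p mu l * pd nu (fun q => Y q 0 l) p).

Definition Lb (b m : R) (g K : 'rV[R]_d -> 'M[R]_d)
  (x v : 'rV[R]_d) (n : R) : R :=
  - (1 / (2 * n)) * ((qf (K x) v) `^ b * (- qf (g x) v) `^ (1 - b))
  - m ^+ 2 / 2 * n.

Definition momentum (b m : R) (g K : 'rV[R]_d -> 'M[R]_d)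
  (x v : 'rV[R]_d) (n : R) (mu : 'I_d) : R :=
  'D_(ebasis mu) (fun w => Lb b m g K x w n) v.

Definition dLdx (b m : R) (g K : 'rV[R]_d -> 'M[R]_d)
  (x v : 'rV[R]_d) (n : R) (mu : 'I_d) : R :=
  'D_(ebasis mu) (fun y => Lb b m g K y v n) x.

Definition dLdn (b m : R) (g K : 'rV[R]_d -> 'M[R]_d)
  (x v : 'rV[R]_d) (n : R) : R :=
  'D_1 (fun t : R => Lb b m g K x v t) n.

Definition euler_lagrange (b m : R) (g K : 'rV[R]_d -> 'M[R]_d)
  (I : set R) (x : R -> 'rV[R]_d) (n : R -> R) : Prop :=
  forall t, I t ->
    derivable x t 1 /\
    (forall mu : 'I_d,
        derivable (fun s => momentum b m g K (x s) ((derive1 x) s) (n s) mu) t 1 /\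
        derive1 (fun s => momentum b m g K (x s) ((derive1 x) s) (n s) mu) t
          = dLdx b m g K (x t) ((derive1 x) t) (n t) mu) /\
    dLdn b m g K (x t) ((derive1 x) t) (n t) = 0.

End Defs.

Definition lorentzian {R : realType} {d : nat} (A : 'M[R]_d.+1) : Prop :=
  A^T = A /\
  exists P : 'M[R]_d.+1, P \in unitmx /\
    P^T *m A *m P = diag_mx (\row_(i < d.+1) if i == ord0 then -1 else 1).

(** Along a solution, the Euler-Lagrange equations and the chain rule give
    [d/dλ (Y^μ p_μ) = Y^μ ∂L/∂x^μ + p_μ ẋ^ν ∂_ν Y^μ].  Since [L_b] depends on
    [(x, ẋ)] only through [𝒦 = K(ẋ,ẋ)] and [𝒢 = -g(ẋ,ẋ)], both terms carry the
    common factor [F = -𝒦^b 𝒢^(1-b) / 2n], and they combine into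
    [F (b (L_Y K)(ẋ,ẋ) / 𝒦 - (1-b) (L_Y g)(ẋ,ẋ) / 𝒢)].  Contracting the
    hypothesis on [L_Y] with [ẋ ẋ] kills its right-hand side, because
    [𝒢 = M^2 𝒦] makes [(g + M^2 K)(ẋ,ẋ)] vanish; hence
    [(L_Y g)(ẋ,ẋ) = b/(1-b) M^2 (L_Y K)(ẋ,ẋ)] and the two terms cancel.

    [smooth_on] only provides directional derivatives, so the chain rule for
    [Y ∘ x] rests on the classical fact that continuous partial derivatives
    yield a Fréchet derivative, proved with the mean value theorem along the
    coordinate staircase from [p] to [p + h]. *)

From HB Require Import structures.
From mathcomp Require Import all_boot all_order all_algebra.
From mathcomp Require Import all_classical all_reals all_analysis.
From mathcomp Require Import ring.
Import Order.TTheory GRing.Theory Num.Theory.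
Import numFieldNormedType.Exports.
Local Open Scope classical_set_scope.
Local Open Scope ring_scope.

Set Implicit Arguments. Unset Strict Implicit. Unset Printing Implicit Defensive.

Section RealVariable.
Context {R : realType}.

Lemma derivable1_continuous (f : R -> R) t : derivable f t 1 -> {for t, continuous f}.
Proof. by move=> df; apply/differentiable_continuous/derivable1_diffP. Qed.

Lemma ler_dist_derive1 (f : R -> R) (e a b : R) : a <= b ->
  (forall s, a <= s <= b -> derivable f s 1 /\ `|derive1 f s| <= e) ->
  `|f b - f a| <= e * (b - a).
Proof.
move=> ab df.
have fd s : s \in `]a, b[ -> is_derive s 1 f (derive1 f s).
  rewrite in_itv /= => /andP[sa sb]; rewrite derive1E.
  by apply/derivableP; apply: (df s _).1; rewrite !ltW.
have fc : {within `[a, b], continuous f}.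
  apply: continuous_in_subspaceT => s; rewrite inE /= in_itv /=.
  by move=> /df[/derivable1_continuous].
have [s] := MVT_segment ab fd fc; rewrite in_itv /= => /df[_ fs] ->.
by rewrite normrM [`|b - a|]ger0_norm ?subr_ge0 // ler_wpM2r ?subr_ge0.
Qed.

Lemma ler_linear_approx (f : R -> R) (c e r : R) :
  (forall s, `|s| <= `|r| -> derivable f s 1 /\ `|derive1 f s - c| <= e) ->
  `|f r - f 0 - c * r| <= e * `|r|.
Proof.
move=> df; pose g s := f s - c * s.
have dg s : `|s| <= `|r| -> derivable g s 1 /\ `|derive1 g s| <= e.
  move=> /df[fs fe].
  have fd : is_derive s 1 f (derive1 f s) by rewrite derive1E; exact: derivableP.
  have gd : is_derive s 1 g (derive1 f s - c).
    by apply: is_derive_eq; rewrite /GRing.scale /= mulr1.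
  by rewrite derive1E derive_val; split; [exact: ex_derive|].
suff : `|g r - g 0| <= e * `|r| by rewrite /g mulr0 subr0 addrAC.
have [r0|r0] := leP 0 r.
  rewrite (ger0_norm r0) -[r in e * r]subr0; apply: ler_dist_derive1 => // s /andP[s0 sr].
  by apply: dg; rewrite !ger0_norm.
rewrite distrC (ltr0_norm r0) -[- r]add0r; apply: ler_dist_derive1 => [|s /andP[rs s0]].
  exact: ltW.
by apply: dg; rewrite (ler0_norm s0) (ltr0_norm r0) lerN2.
Qed.

Lemma is_derive0_eq (f : R -> R) (a c : R) :
  (forall t, a < t < c -> is_derive t 1 f 0) ->
  forall t1 t2, a < t1 < c -> a < t2 < c -> f t1 = f t2.
Proof.
move=> f'0 t1 t2; wlog t12 : t1 t2 / t1 <= t2 => [wlog_t12 t1in t2in|].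
  by case: (leP t1 t2) => [|/ltW] t12; [|apply/esym]; apply: wlog_t12.
move=> /andP[at1 _] /andP[_ t2c]; apply/esym/eqP; rewrite -subr_eq0 -normr_le0.
rewrite -(mul0r (t2 - t1)) ler_dist_derive1 // => s /andP[t1s st2].
have fs : is_derive s 1 f 0 by apply: f'0; rewrite (lt_le_trans at1) ?(le_lt_trans st2).
by rewrite derive1E derive_val normr0; split; [exact: ex_derive|].
Qed.

End RealVariable.

Section Lines.
Context {R : realType} {V W : normedModType R}.

Let line_quotient (f : V -> W) (a v : V) (t : R) :
  (fun h : R => h^-1 *: (f (h *: v + (a + t *: v)) - f (a + t *: v))) =
  (fun h : R => h^-1 *: ((fun s : R => f (a + s *: v)) (h *: 1 + t)
                          - (fun s : R => f (a + s *: v)) t)).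
Proof.
apply/funext => h /=; congr (_ *: (f _ - _)).
by rewrite [h *: 1]mulr1 scalerDl addrCA.
Qed.

Lemma derivable_line (f : V -> W) (a v : V) (t : R) :
  derivable f (a + t *: v) v <-> derivable (fun s : R => f (a + s *: v)) t 1.
Proof. by rewrite /derivable line_quotient. Qed.

Lemma derive_line (f : V -> W) (a v : V) (t : R) :
  'D_v f (a + t *: v) = 'D_1 (fun s : R => f (a + s *: v)) t.
Proof. by rewrite /derive line_quotient. Qed.

Lemma is_derive_line (f : V -> W) (a v : V) : derivable f a v ->
  is_derive (0 : R) 1 (fun s : R => f (a + s *: v)) ('D_v f a).
Proof.
move=> df; have := derivable_line f a v 0; rewrite scale0r addr0 => /iffLR /(_ df).
by move=> /derivableP; rewrite -derive_line scale0r addr0.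
Qed.

End Lines.

Section Partials.
Context {R : realType} {N : nat}.
Implicit Types (p q h : 'rV[R]_N) (f : 'rV[R]_N -> R).

Lemma ler_row_entry_norm h i : `|h 0 i| <= `|h|.
Proof. by rewrite [X in _ <= X]/Num.norm /= mx_normrE; exact: (le_bigmax _ _ (0, i)). Qed.

Lemma row_norm_le h r : 0 <= r -> (forall i, `|h 0 i| <= r) -> `|h| <= r.
Proof.
move=> r0 hr; rewrite [X in X <= _]/Num.norm /= mx_normrE.
by apply: bigmax_le => // -[i j] _ /=; rewrite (ord1 i).
Qed.

Definition coord_comb (c : 'I_N -> R) h : R := \sum_i h 0 i * c i.

Lemma coord_comb_is_linear c : linear (coord_comb c).
Proof.
move=> a u v; rewrite /coord_comb scaler_sumr -big_split /=; apply: eq_bigr => i _.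
by rewrite !mxE /GRing.scale /= mulrDl mulrA.
Qed.

HB.instance Definition _ c :=
  GRing.isLinear.Build R 'rV[R]_N R *:%R (coord_comb c) (coord_comb_is_linear c).

Lemma coord_comb_continuous c : continuous (coord_comb c).
Proof.
move=> v; have -> : coord_comb c = \sum_i (fun w : 'rV[R]_N => w 0 i * c i).
  by apply/funext => w; rewrite fct_sumE.
elim/big_ind: _ => [|f g fc gc|i _]; first exact: cst_continuous.
  exact: continuousD.
apply: (@continuousZr_tmp _ _ _ (fun w : 'rV[R]_N => w 0 i)); exact: coord_continuous.
Qed.

Definition stair p h (k : nat) : 'rV[R]_N :=
  \row_i (if (i < k)%N then p 0 i + h 0 i else p 0 i).

Lemma stair0 p h : stair p h 0 = p.
Proof. by apply/rowP => i; rewrite mxE. Qed.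

Lemma stairN p h : stair p h N = p + h.
Proof. by apply/rowP => i; rewrite !mxE ltn_ord. Qed.

Lemma stairS p h (k : 'I_N) : stair p h k.+1 = stair p h k + h 0 k *: ebasis k.
Proof.
apply/rowP => i; rewrite !mxE eqxx /= ltnS leq_eqVlt -val_eqE /=.
by case: (ltngtP i k) => [ik|ik|/val_inj ->]; rewrite ?eqxx ?mulr1 // mulr0 addr0.
Qed.

Lemma stair_step_near p h (k : 'I_N) s : `|s| <= `|h 0 k| ->
  `|p - (stair p h k + s *: ebasis k)| <= `|h|.
Proof.
move=> sk; apply: row_norm_le => // i; rewrite !mxE eqxx /= -val_eqE /=.
case: (ltngtP i k) => [ik|ik|/val_inj ->]; rewrite ?eqxx ?mulr1 ?mulr0 ?addr0.
- by rewrite opprD addNKr normrN ler_row_entry_norm.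
- by rewrite subrr normr0.
- by rewrite opprD addNKr normrN (le_trans sk) // ler_row_entry_norm.
Qed.

Lemma ler_coord_comb_approx f p h (c : 'I_N -> R) e :
  (forall q k, `|p - q| <= `|h| ->
     derivable f q (ebasis k) /\ `|c k - 'D_(ebasis k) f q| <= e) ->
  `|f (p + h) - f p - coord_comb c h| <= e * N%:R * `|h|.
Proof.
move=> near_p.
have step (k : 'I_N) :
    `|f (stair p h k.+1) - f (stair p h k) - c k * h 0 k| <= e * `|h 0 k|.
  pose phi s := f (stair p h k + s *: ebasis k).
  have -> : f (stair p h k) = phi 0 by rewrite /phi scale0r addr0.
  rewrite stairS; apply: (ler_linear_approx (f := phi)) => s sk.
  have [dfs dfe] := near_p _ k (stair_step_near p sk).
  split; first exact/derivable_line.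
  by rewrite derive1E -derive_line distrC.
have e0 (k : 'I_N) : 0 <= e.
  have [|_ ek] := near_p p k; first by rewrite subrr normr0.
  exact: le_trans ek.
have telescope : f (p + h) - f p - coord_comb c h =
    \sum_(k < N) (f (stair p h k.+1) - f (stair p h k) - c k * h 0 k).
  rewrite sumrB -(big_mkord xpredT (fun k => f (stair p h k.+1) - f (stair p h k))).
  rewrite telescope_sumr // stairN stair0; congr (_ - _).
  by apply: eq_bigr => k _; rewrite mulrC.
rewrite telescope (le_trans (ler_norm_sum _ _ _)) //.
rewrite mulrAC mulr_natr -[N in _ *+ N]card_ord -sumr_const ler_sum // => k _.
by rewrite (le_trans (step k)) // ler_wpM2l ?(e0 k) ?ler_row_entry_norm.
Qed.

Lemma partials_differentiable f (U : set 'rV[R]_N) p : open U -> U p ->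
  (forall q, U q -> forall i, derivable f q (ebasis i)) ->
  (forall i, {for p, continuous ('D_(ebasis i) f)}) ->
  differentiable f p /\ 'd f p = coord_comb (fun i => 'D_(ebasis i) f p) :> (_ -> _).
Proof.
move=> oU Up df cf; set c := fun i => 'D_(ebasis i) f p.
have little_o : f \o shift p = cst (f p) + coord_comb c +o_ (0 : 'rV[R]_N) id.
  apply/eqaddoP => eps eps0; pose e := eps / (N%:R + 1).
  have e0 : 0 < e by rewrite divr_gt0 // ltr_wpDl.
  have near_p : \forall q \near p, U q /\ forall i, `|c i - 'D_(ebasis i) f q| <= e.
    near=> q; split; first by near: q; exact: open_nbhs_nbhs.
    near: q; apply: filter_forall => i.
    by move: (cf i) => /cvgr_dist_le /(_ e e0).
  have [del del0 near_del] := (@nbhs_normP R _ p _).1 near_p.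
  apply/(@nbhs_normP R _ (0 : 'rV[R]_N)); exists del => // h /=.
  rewrite sub0r normrN => hdel.
  rewrite -[X in `|X|]/(f (h + p) - (f p + coord_comb c h)) [h + p]addrC opprD addrA.
  apply: le_trans (ler_coord_comb_approx (e := e) _) _.
    move=> q k hq; have [Uq dq] := near_del q (le_lt_trans hq hdel).
    by split; [exact: df | exact: dq].
  rewrite ler_wpM2r // /e mulrAC ler_pdivrMr ?ltr_wpDl //.
  by rewrite ler_wpM2l ?(ltW eps0) // lerDl.
have dfE : 'd f p = coord_comb c :> (_ -> _).
  by apply: diff_unique; [exact: coord_comb_continuous | exact: little_o].
split; last exact: dfE.
by apply/diff_locallyP; rewrite dfE; split; [exact: coord_comb_continuous | exact: little_o].
Unshelve. all: by end_near. Qed.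

Lemma chain_rule_curve f (U : set 'rV[R]_N) (x : R -> 'rV[R]_N) t :
  open U -> U (x t) ->
  (forall q, U q -> forall i, derivable f q (ebasis i)) ->
  (forall i, {for x t, continuous ('D_(ebasis i) f)}) ->
  derivable x t 1 ->
  derivable (f \o x) t 1 /\
  derive1 (f \o x) t = \sum_i derive1 x t 0 i * pd i f (x t).
Proof.
move=> oU Ux df cf dx.
have [dfx dfxE] := partials_differentiable oU Ux df cf.
have dx' : differentiable x t by apply/derivable1_diffP.
have dc : differentiable (f \o x) t by apply: differentiable_comp.
split; first exact/derivable1_diffP.
by rewrite derive1E' // diff_comp // /= dfxE -derive1E'.
Qed.

Lemma smooth_on_C1 (U : set 'rV[R]_N) f p : smooth_on U f -> U p ->
  (forall v, derivable f p v) /\ forall i, {for p, continuous ('D_(ebasis i) f)}.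
Proof.
move=> smooth_f Up; split=> [v|i]; first exact: (smooth_f [::] _ Up).1.
exact: (smooth_f [:: ebasis i] _ Up).2.
Qed.

End Partials.

Section QuadraticForms.
Context {R : realType} {N : nat}.
Implicit Types (A : 'M[R]_N) (p v e : 'rV[R]_N) (h : 'rV[R]_N -> 'M[R]_N).

Definition polar A v e : R :=
  \sum_i \sum_j A i j * (e 0 i * v 0 j + v 0 i * e 0 j).

Let sum_poly2 (a b c : 'I_N -> R) s :
  \sum_i a i + s * (\sum_i b i + s * \sum_i c i) = \sum_i (a i + s * (b i + s * c i)).
Proof. by rewrite mulr_sumr -big_split mulr_sumr -big_split. Qed.

Lemma qf_line A v e s : qf A (v + s *: e) = qf A v + s * (polar A v e + s * qf A e).
Proof.
rewrite /qf /polar sum_poly2; apply: eq_bigr => i _.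
by rewrite sum_poly2; apply: eq_bigr => j _; rewrite !mxE; ring.
Qed.

Lemma is_derive_qf_line A v e :
  is_derive (0 : R) 1 (fun s => qf A (v + s *: e)) (polar A v e).
Proof.
under eq_fun do rewrite qf_line.
by apply: is_derive_eq; rewrite /GRing.scale /=; ring.
Qed.

Lemma qfD A B v : qf (A + B) v = qf A v + qf B v.
Proof.
rewrite /qf -big_split; apply: eq_bigr => i _ /=.
by rewrite -big_split; apply: eq_bigr => j _ /=; rewrite !mxE; ring.
Qed.

Lemma qfZ c A v : qf (c *: A) v = c * qf A v.
Proof.
rewrite /qf mulr_sumr; apply: eq_bigr => i _ /=.
by rewrite mulr_sumr; apply: eq_bigr => j _ /=; rewrite !mxE; ring.
Qed.

Definition pd_mx (i : 'I_N) h p : 'M[R]_N := \matrix_(j, k) pd i (fun q => h q j k) p.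

Lemma is_derive_qf_field h p v i :
  (forall j k, derivable (fun q => h q j k) p (ebasis i)) ->
  is_derive (0 : R) 1 (fun s => qf (h (p + s *: ebasis i)) v) (qf (pd_mx i h p) v).
Proof.
move=> dh; rewrite [X in is_derive _ _ X](_ : _ =
    \sum_j \sum_k (fun s => h (p + s *: ebasis i) j k * v 0 j * v 0 k)); last first.
  by apply/funext => s; rewrite /qf fct_sumE; apply: eq_bigr => j _; rewrite fct_sumE.
apply: is_derive_sum => j; apply: is_derive_sum => k.
have dhjk := is_derive_line (dh j k).
by rewrite mxE; apply: is_derive_eq; rewrite /GRing.scale /= /pd; ring.
Qed.

End QuadraticForms.

Section Lagrangian.
Context {R : realType} {N : nat}.
Variables (b m : R) (g K : 'rV[R]_N -> 'M[R]_N).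

(* [Lb b m g K x v n] unfolds to [finsler_term n (qf (K x) v) (- qf (g x) v) - m ^+ 2 / 2 * n]. *)
Definition finsler_term (n k G : R) : R := - (1 / (2 * n)) * (k `^ b * G `^ (1 - b)).

Lemma is_derive_Lb_comp (n t : R) (k G : R -> R) (dk dG : R) :
  n != 0 -> 0 < k t -> 0 < G t -> is_derive t 1 k dk -> is_derive t 1 G dG ->
  is_derive t 1 (fun s => finsler_term n (k s) (G s) - m ^+ 2 / 2 * n)
    (finsler_term n (k t) (G t) * (b * dk / k t + (1 - b) * dG / G t)).
Proof.
move=> n0 k0 G0 dk_ dG_.
have dkb := is_derive1_comp (is_derive1_powR b k0) dk_.
have dGb := is_derive1_comp (is_derive1_powR (1 - b) G0) dG_.
apply: is_derive_eq; rewrite /GRing.scale /= /finsler_term.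
have kt0 : k t != 0 by rewrite gt_eqF.
have Gt0 : G t != 0 by rewrite gt_eqF.
rewrite (@powRB _ (k t) b 1) ?kt0 ?implybT // (@powRB _ (G t) (1 - b) 1) ?Gt0 ?implybT //.
rewrite !powRr1 ?ltW //; field.
by rewrite kt0 Gt0 n0.
Qed.

Lemma momentumE x v n mu : n != 0 -> 0 < qf (K x) v -> 0 < - qf (g x) v ->
  momentum b m g K x v n mu =
  finsler_term n (qf (K x) v) (- qf (g x) v) *
    (b * polar (K x) v (ebasis mu) / qf (K x) v
     + (1 - b) * - polar (g x) v (ebasis mu) / - qf (g x) v).
Proof.
move=> n0 K0 G0; rewrite /momentum.
have := derive_line (fun w => Lb b m g K x w n) v (ebasis mu) 0.
rewrite scale0r addr0 => ->; apply: derive_val.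
have dK := is_derive_qf_line (K x) v (ebasis mu).
have dG : is_derive (0 : R) 1 (fun s => - qf (g x) (v + s *: ebasis mu))
    (- polar (g x) v (ebasis mu)) := is_deriveN (is_derive_qf_line _ _ _).
by have := is_derive_Lb_comp n0 _ _ dK dG; rewrite /= !scale0r !addr0; apply.
Qed.

Lemma dLdxE x v n mu : n != 0 -> 0 < qf (K x) v -> 0 < - qf (g x) v ->
  (forall i j, derivable (fun q => K q i j) x (ebasis mu)) ->
  (forall i j, derivable (fun q => g q i j) x (ebasis mu)) ->
  dLdx b m g K x v n mu =
  finsler_term n (qf (K x) v) (- qf (g x) v) *
    (b * qf (pd_mx mu K x) v / qf (K x) v
     + (1 - b) * - qf (pd_mx mu g x) v / - qf (g x) v).
Proof.
move=> n0 K0 G0 dK dg; rewrite /dLdx.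
have := derive_line (fun y => Lb b m g K y v n) x (ebasis mu) 0.
rewrite scale0r addr0 => ->; apply: derive_val.
have dKx := is_derive_qf_field v dK.
have dGx : is_derive (0 : R) 1 (fun s => - qf (g (x + s *: ebasis mu)) v)
    (- qf (pd_mx mu g x) v) := is_deriveN (is_derive_qf_field v dg).
by have := is_derive_Lb_comp n0 _ _ dKx dGx; rewrite /= !scale0r !addr0; apply.
Qed.

End Lagrangian.

Section LieDerivative.
Context {R : realType} {N : nat}.
Implicit Types (A : 'M[R]_N) (p v : 'rV[R]_N).
Implicit Types (Y : 'rV[R]_N -> 'rV[R]_N) (h : 'rV[R]_N -> 'M[R]_N).

Definition lie_mx Y h p : 'M[R]_N := \matrix_(mu, nu) lie_deriv Y h p mu nu.

Definition pd_along Y p v (l : 'I_N) : R := \sum_i v 0 i * pd i (fun q => Y q 0 l) p.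

Lemma ebasisE (k i : 'I_N) : (ebasis k : 'rV[R]_N) 0 i = (i == k)%:R.
Proof. by rewrite mxE eqxx. Qed.

Let sum_ebasis (F : 'I_N -> R) l : \sum_i (ebasis l : 'rV[R]_N) 0 i * F i = F l.
Proof.
rewrite (bigD1 l) //= big1 => [|i il]; first by rewrite ebasisE eqxx mul1r addr0.
by rewrite ebasisE (negbTE il) mul0r.
Qed.

Lemma polar_ebasis A v l :
  polar A v (ebasis l) = \sum_j A l j * v 0 j + \sum_i A i l * v 0 i.
Proof.
transitivity (\sum_i \sum_j (ebasis l : 'rV[R]_N) 0 i * (A i j * v 0 j)
            + \sum_j \sum_i (ebasis l : 'rV[R]_N) 0 j * (A i j * v 0 i)).
  rewrite [X in _ = _ + X]exchange_big -big_split; apply: eq_bigr => i _ /=.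
  by rewrite -big_split; apply: eq_bigr => j _ /=; ring.
congr (_ + _).
  rewrite -(sum_ebasis (fun i => \sum_j A i j * v 0 j)).
  by under [RHS]eq_bigr do rewrite mulr_sumr.
rewrite -(sum_ebasis (fun j => \sum_i A i j * v 0 i)).
by under [RHS]eq_bigr do rewrite mulr_sumr.
Qed.

Lemma qf_lie_mx Y h p v :
  qf (lie_mx Y h p) v =
  \sum_l (pd_along Y p v l * polar (h p) v (ebasis l) + Y p 0 l * qf (pd_mx l h p) v).
Proof.
transitivity (\sum_mu \sum_nu \sum_l
   ((Y p 0 l * pd l (fun q => h q mu nu) p + h p l nu * pd mu (fun q => Y q 0 l) p
    + h p mu l * pd nu (fun q => Y q 0 l) p) * v 0 mu * v 0 nu)).
  by apply: eq_bigr => mu _; apply: eq_bigr => nu _; rewrite mxE !mulr_suml.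
under eq_bigr => mu _ do rewrite exchange_big.
rewrite exchange_big /=; apply: eq_bigr => l _.
have along_left : pd_along Y p v l * \sum_j h p l j * v 0 j =
    \sum_mu \sum_nu (v 0 mu * pd mu (fun q => Y q 0 l) p) * (h p l nu * v 0 nu).
  by rewrite mulr_suml; apply: eq_bigr => mu _; rewrite mulr_sumr.
have along_right : pd_along Y p v l * \sum_i h p i l * v 0 i =
    \sum_mu \sum_nu (v 0 nu * pd nu (fun q => Y q 0 l) p) * (h p mu l * v 0 mu).
  rewrite mulrC mulr_suml; apply: eq_bigr => mu _; rewrite mulr_sumr.
  by apply: eq_bigr => nu _; rewrite mulrC.
have transport : Y p 0 l * qf (pd_mx l h p) v =
    \sum_mu \sum_nu Y p 0 l * (pd l (fun q => h q mu nu) p * v 0 mu * v 0 nu).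
  rewrite mulr_sumr; apply: eq_bigr => mu _; rewrite mulr_sumr.
  by under eq_bigr do rewrite mxE.
rewrite polar_ebasis mulrDr along_left along_right transport -!big_split.
apply: eq_bigr => mu _ /=; rewrite -!big_split; apply: eq_bigr => nu _ /=.
ring.
Qed.

Lemma lie_mxBZ Y (g K : 'rV[R]_N -> 'M[R]_N) (c : R) p :
  (forall l i j, derivable (fun q => g q i j) p (ebasis l)) ->
  (forall l i j, derivable (fun q => K q i j) p (ebasis l)) ->
  lie_mx Y (fun q => g q - c *: K q) p = lie_mx Y g p - c *: lie_mx Y K p.
Proof.
move=> dg dK; apply/matrixP => mu nu; rewrite !mxE /lie_deriv mulr_sumr -sumrB.
apply: eq_bigr => l _ /=.
have -> : (fun q => (g q - c *: K q) mu nu) = (fun q => g q mu nu) - c *: (fun q => K q mu nu).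
  by apply/funext => q; rewrite !mxE.
rewrite /pd deriveB ?deriveZ //; last exact: derivableZ.
by rewrite !mxE /GRing.scale /=; ring.
Qed.

Lemma qf_lie_conformal_null Y (g K : 'rV[R]_N -> 'M[R]_N) (Omega : 'rV[R]_N -> R)
    (c M2 : R) p v :
  (forall l i j, derivable (fun q => g q i j) p (ebasis l)) ->
  (forall l i j, derivable (fun q => K q i j) p (ebasis l)) ->
  (forall mu nu, lie_deriv Y (fun q => g q - c *: K q) p mu nu
                 = 2 * Omega p * (g p + M2 *: K p) mu nu) ->
  qf (g p) v + M2 * qf (K p) v = 0 ->
  qf (lie_mx Y g p) v = c * qf (lie_mx Y K p) v.
Proof.
move=> dg dK conformal null.
have : lie_mx Y (fun q => g q - c *: K q) p = (2 * Omega p) *: (g p + M2 *: K p).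
  by apply/matrixP => mu nu; rewrite mxE [RHS]mxE conformal.
rewrite lie_mxBZ // => /(congr1 (qf^~ v)).
rewrite -scaleNr !(qfD, qfZ) null mulr0 mulNr => /eqP.
by rewrite addr_eq0 opprK => /eqP.
Qed.

End LieDerivative.

Section NoetherCharge.
Context {R : realType} {N : nat}.
Variables (b m : R) (g K : 'rV[R]_N -> 'M[R]_N) (Y : 'rV[R]_N -> 'rV[R]_N).

Definition noether_charge (x v : 'rV[R]_N) (n : R) : R :=
  \sum_mu Y x 0 mu * momentum b m g K x v n mu.

Lemma is_derive_noether_charge (U : set 'rV[R]_N) (x : R -> 'rV[R]_N) (n : R -> R) t :
  let p := x t in let v := derive1 x t in
  open U -> U p -> n t != 0 -> 0 < qf (K p) v -> 0 < - qf (g p) v ->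
  derivable x t 1 ->
  (forall mu, derivable (fun s => momentum b m g K (x s) (derive1 x s) (n s) mu) t 1 /\
     derive1 (fun s => momentum b m g K (x s) (derive1 x s) (n s) mu) t
     = dLdx b m g K p v (n t) mu) ->
  (forall l i j, derivable (fun q => g q i j) p (ebasis l)) ->
  (forall l i j, derivable (fun q => K q i j) p (ebasis l)) ->
  (forall l q, U q -> forall i, derivable (fun q => Y q 0 l) q (ebasis i)) ->
  (forall l i, {for p, continuous ('D_(ebasis i) (fun q => Y q 0 l))}) ->
  is_derive t 1 (fun s => noether_charge (x s) (derive1 x s) (n s))
    (finsler_term b (n t) (qf (K p) v) (- qf (g p) v) *
      (b * qf (lie_mx Y K p) v / qf (K p) v
       + (1 - b) * - qf (lie_mx Y g p) v / - qf (g p) v)).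
Proof.
move=> p v oU Up n0 K0 G0 dx EL dg dK dY cY.
pose P mu s := momentum b m g K (x s) (derive1 x s) (n s) mu.
have dterm mu : is_derive t 1 (fun s => Y (x s) 0 mu * P mu s)
    (Y p 0 mu * dLdx b m g K p v (n t) mu + P mu t * pd_along Y p v mu).
  have [dYx dYxE] := chain_rule_curve oU Up (dY mu) (cY mu) dx.
  have [dP dPE] := EL mu.
  have hY : is_derive t 1 (fun s => Y (x s) 0 mu) (pd_along Y p v mu).
    by rewrite /pd_along -dYxE derive1E; exact: derivableP.
  have hP : is_derive t 1 (P mu) (dLdx b m g K p v (n t) mu).
    by rewrite -dPE derive1E; exact: derivableP.
  by apply: is_derive_eq.
have -> : (fun s => noether_charge (x s) (derive1 x s) (n s))
    = \sum_mu (fun s => Y (x s) 0 mu * P mu s).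
  by apply/funext => s; rewrite fct_sumE.
apply: (is_derive_eq (is_derive_sum dterm)).
set F := finsler_term _ _ _ _; set Kq := qf (K p) v; set Gq := - qf (g p) v.
rewrite !qf_lie_mx -sumrN !mulr_sumr !mulr_suml -big_split /= mulr_sumr.
apply: eq_bigr => mu _; rewrite /P momentumE // dLdxE // -/p -/v -/F -/Kq -/Gq.
ring.
Qed.

End NoetherCharge.

Unset Implicit Arguments. Set Strict Implicit. Set Printing Implicit Defensive.

Theorem theorem3 (R : realType) (d : nat)
  (U : set 'rV[R]_d.+2) (g K : 'rV[R]_d.+2 -> 'M[R]_d.+2)
  (b m M2 : R) (Y : 'rV[R]_d.+2 -> 'rV[R]_d.+2) (Omega : 'rV[R]_d.+2 -> R)
  (a c : R) (x : R -> 'rV[R]_d.+2) (n : R -> R) :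
  open U ->
  (forall p, U p -> lorentzian (g p)) ->
  (forall i j, smooth_on U (fun p => g p i j)) ->
  (forall p, U p -> (K p)^T = K p) ->
  (forall i j, smooth_on U (fun p => K p i j)) ->
  (forall p, U p -> forall k mu nu, cov_deriv g K p k mu nu = 0) ->
  0 < b -> b < 1 ->
  0 < M2 ->
  (forall i, smooth_on U (fun p => Y p 0 i)) ->
  smooth_on U Omega ->
  (forall p, U p -> forall mu nu,
     lie_deriv Y (fun q => g q - (b / (1 - b) * M2) *: K q) p mu nu
     = 2 * Omega p * (g p + M2 *: K p) mu nu) ->
  (* the solution, defined on the open interval ]a, c[ *)
  (forall t, a < t < c -> U (x t)) ->
  (forall t, a < t < c -> 0 < n t) ->
  euler_lagrange b m g K `]a, c[ x n ->
  (forall t, a < t < c -> 0 < - qf (g (x t)) ((derive1 x) t)) ->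
  (forall t, a < t < c -> 0 < qf (K (x t)) ((derive1 x) t)) ->
  (forall t, a < t < c ->
     qf (K (x t)) ((derive1 x) t) / (- qf (g (x t)) ((derive1 x) t)) = M2^-1) ->
  forall t1 t2, a < t1 < c -> a < t2 < c ->
    \sum_(mu < d.+2) Y (x t1) 0 mu * momentum b m g K (x t1) ((derive1 x) t1) (n t1) mu
    = \sum_(mu < d.+2) Y (x t2) 0 mu * momentum b m g K (x t2) ((derive1 x) t2) (n t2) mu.
Proof.
move=> oU _ smooth_g _ smooth_K _ b0 b1 M2_gt0 smooth_Y _ conformal xU n_gt0 EL
  G_gt0 K_gt0 ratio.
apply: (is_derive0_eq (f := fun s => noether_charge b m g K Y (x s) (derive1 x s) (n s)))
  => t tin.
have [dx [dmomentum _]] := EL t tin.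
have Up := xU t tin; have Kt := K_gt0 t tin; have Gt := G_gt0 t tin.
have dg l i j := (smooth_on_C1 (smooth_g i j) Up).1 (ebasis l).
have dK l i j := (smooth_on_C1 (smooth_K i j) Up).1 (ebasis l).
have nt : n t != 0 by rewrite gt_eqF ?n_gt0.
apply: is_derive_eq (is_derive_noether_charge oU Up nt Kt Gt dx dmomentum dg dK
  (fun l q Uq i => (smooth_on_C1 (smooth_Y l) Uq).1 _)
  (fun l i => (smooth_on_C1 (smooth_Y l) Up).2 i)) _.
have null : - qf (g (x t)) (derive1 x t) = M2 * qf (K (x t)) (derive1 x t).
  rewrite -[LHS]mul1r -(mulfV (lt0r_neq0 M2_gt0)) -(ratio t tin).
  by field; rewrite -oppr_eq0 gt_eqF.
rewrite (qf_lie_conformal_null dg dK (conformal _ Up)); last first.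
  by apply/eqP; rewrite addr_eq0 -null opprK.
by rewrite null; field; rewrite !gt_eqF ?subr_gt0.
Qed.
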